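(* Let $(\mathbb{L},\Box,\Diamond)$ be an $\mathcal{L}$-algebra as in the context, let $f$ be a proper $\mathbf{A}$-filter of $\mathbb{L}$ and $i$ a proper $\mathbf{A}$-ideal of $\mathbb{L}$. Then (1) $\bigvee_{b\in\mathbb{L}}(f^{-\Diamond}(b)\otimes i(b))=\bigvee_{a\in\mathbb{L}}(f(a)\otimes i(\Diamond a))$; (2) $\bigvee_{b\in\mathbb{L}}(f(b)\otimes i^{-\Box}(b))=\bigvee_{a\in\mathbb{L}}(f(\Box a)\otimes i(a))$.
   Context: $\mathbf{A}=(D,1,0,\vee,\wedge,\otimes,\to)$ is a fixed complete lattice with top $1$ and bottom $0$, frame-distributive and dually frame-distributive, with a commutative associative $\otimes$ residuated by $\to$ ($\alpha\otimes\beta\le\gamma$ iff $\alpha\le\beta\to\gamma$), and $1\to\alpha=\alpha$ for all $\alpha$. An $\mathcal{L}$-algebra $(\mathbb{L},\Box,\Diamond)$ is a bounded lattice $\mathbb{L}$ with unary operations $\Box$ preserving finite meets (including $\Box\top=\top$) and $\Diamond$ preserving finite joins (including $\Diamond\bot=\bot$). An $\mathbf{A}$-filter of $\mathbb{L}$ is $f:\mathbb{L}\to\mathbf{A}$ with $f(\top)=1$ and $f(a\wedge b)=f(a)\wedge f(b)$; it is proper if moreover $f(\bot)=0$. An $\mathbf{A}$-ideal is $i:\mathbb{L}\to\mathbf{A}$ with $i(\bot)=1$ and $i(a\vee b)=i(a)\wedge i(b)$; proper if moreover $i(\top)=0$. For $k:\mathbb{L}\to\mathbf{A}$, $k^{-\Diamond}(a)=\bigvee\{k(b)\mid\Diamond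 b\le a\}$ and $k^{-\Box}(a)=\bigvee\{k(b)\mid a\le\Box b\}$. *)

From HB Require Import structures.
From mathcomp Require Import all_boot all_order.
Set Implicit Arguments. Unset Strict Implicit. Unset Printing Implicit Defensive.
Import Order.TTheory.
Local Open Scope order_scope.

Record Aalg := {
  car :> Type;
  ale : car -> car -> Prop;
  ale_refl : forall x, ale x x;
  ale_trans : forall x y z, ale x y -> ale y z -> ale x z;
  ale_anti : forall x y, ale x y -> ale y x -> x = y;
  asup : (car -> Prop) -> car;
  asup_ub : forall S x, S x -> ale x (asup S);
  asup_least : forall S u, (forall x, S x -> ale x u) -> ale (asup S) u;
  ainf : (car -> Prop) -> car;
  ainf_lb : forall S x, S x -> ale (ainf S) x;
  ainf_greatest : forall S l, (forall x, S x -> ale l x) -> ale l (ainf S);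
  aone : car;
  azero : car;
  aone_top : forall x, ale x aone;
  azero_bot : forall x, ale azero x;
  ajoin : car -> car -> car;
  ajoin_ub1 : forall x y, ale x (ajoin x y);
  ajoin_ub2 : forall x y, ale y (ajoin x y);
  ajoin_least : forall x y z, ale x z -> ale y z -> ale (ajoin x y) z;
  ameet : car -> car -> car;
  ameet_lb1 : forall x y, ale (ameet x y) x;
  ameet_lb2 : forall x y, ale (ameet x y) y;
  ameet_greatest : forall x y z, ale z x -> ale z y -> ale z (ameet x y);
  frame_distr : forall a S,
    ameet a (asup S) = asup (fun z => exists2 s, S s & z = ameet a s);
  dframe_distr : forall a S,
    ajoin a (ainf S) = ainf (fun z => exists2 s, S s & z = ajoin a s);
  atensor : car -> car -> car;
  atensorC : forall x y, atensor x y = atensor y x;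
  atensorA : forall x y z, atensor x (atensor y z) = atensor (atensor x y) z;
  aimpl : car -> car -> car;
  residuation : forall a b c, ale (atensor a b) c <-> ale a (aimpl b c);
  aimpl1 : forall a, aimpl aone a = a
}.

Definition bigsup (A : Aalg) (I : Type) (F : I -> A) : A :=
  asup (fun z => exists x : I, z = F x).

Section LAlg.
Context {d : Order.disp_t} (L : tbLatticeType d).

Definition box_op (bx : L -> L) : Prop :=
  bx \top = \top /\ forall a b, bx (a `&` b) = bx a `&` bx b.
Definition dia_op (dm : L -> L) : Prop :=
  dm \bot = \bot /\ forall a b, dm (a `|` b) = dm a `|` dm b.

Context (A : Aalg).

Definition is_Afilter (f : L -> A) : Prop :=
  f \top = aone A /\ forall a b, f (a `&` b) = ameet (f a) (f b).
Definition is_proper_Afilter (f : L -> A) : Prop :=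
  is_Afilter f /\ f \bot = azero A.
Definition is_Aideal (i : L -> A) : Prop :=
  i \bot = aone A /\ forall a b, i (a `|` b) = ameet (i a) (i b).
Definition is_proper_Aideal (i : L -> A) : Prop :=
  is_Aideal i /\ i \top = azero A.

Definition inv_dia (dm : L -> L) (k : L -> A) (a : L) : A :=
  asup (fun z => exists2 b, dm b <= a & z = k b).
Definition inv_box (bx : L -> L) (k : L -> A) (a : L) : A :=
  asup (fun z => exists2 b, a <= bx b & z = k b).

End LAlg.

(* Since a (x) - is residuated, tensoring distributes over arbitrary joins, so
   the left-hand side of (1) is the join of f(c) (x) i(b) over all pairs with
   Dia c <= b.  An A-ideal is antitone, hence each such term lies below
   f(c) (x) i(Dia c), while the choice b = Dia c shows the converse; (2) is
   dual, using that an A-filter is monotone. *)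
From HB Require Import structures.
From mathcomp Require Import all_boot all_order.
Import Order.TTheory.

Section TensorJoin.
Context {A : Aalg}.

Lemma atensor_monol (a a' b : A) : ale a a' -> ale (atensor a b) (atensor a' b).
Proof.
move=> le_aa'; apply/residuation; apply: ale_trans le_aa' _.
by apply/residuation; apply: ale_refl.
Qed.

Lemma atensor_monor (a b b' : A) : ale b b' -> ale (atensor a b) (atensor a b').
Proof. by move=> le_bb'; rewrite !(atensorC a); apply: atensor_monol. Qed.

Lemma atensor_asupl_le (S : A -> Prop) (x u : A) :
  (forall s, S s -> ale (atensor s x) u) -> ale (atensor (asup S) x) u.
Proof.
move=> le_Su; apply/residuation; apply: asup_least => s Ss.
by apply/residuation; apply: le_Su.
Qed.

Lemma atensor_asupr_le (S : A -> Prop) (x u : A) :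
  (forall s, S s -> ale (atensor x s) u) -> ale (atensor x (asup S)) u.
Proof.
move=> le_Su; rewrite atensorC; apply: atensor_asupl_le => s Ss.
by rewrite atensorC; apply: le_Su.
Qed.

Lemma bigsup_le (I : Type) (F : I -> A) (u : A) :
  (forall x, ale (F x) u) -> ale (bigsup F) u.
Proof. by move=> le_Fu; apply: asup_least => _ [x ->]. Qed.

Lemma le_bigsup {I : Type} {F : I -> A} (x : I) (y : A) :
  ale y (F x) -> ale y (bigsup F).
Proof. by move=> le_yF; apply: ale_trans le_yF (asup_ub _); exists x. Qed.

End TensorJoin.

Section LAlgebra.
Context {d : Order.disp_t} (L : tbLatticeType d) (A : Aalg).
Implicit Types (f i k : L -> A).

Lemma Afilter_homo f : is_Afilter f -> {homo f : a b / (a <= b)%O >-> ale a b}.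
Proof. by case=> _ fI a b /meet_idPl <-; rewrite fI; apply: ameet_lb2. Qed.

Lemma Aideal_anti i : is_Aideal i -> {homo i : a b / (a <= b)%O >-> ale b a}.
Proof. by case=> _ iU a b /join_idPr <-; rewrite iU; apply: ameet_lb1. Qed.

Lemma bigsup_inv_dia_atensor (dm : L -> L) k i :
  {homo i : a b / (a <= b)%O >-> ale b a} ->
  bigsup (fun b => atensor (inv_dia dm k b) (i b))
    = bigsup (fun a => atensor (k a) (i (dm a))).
Proof.
move=> i_anti; apply: ale_anti; apply: bigsup_le.
- move=> b; apply: atensor_asupl_le => _ [c le_dc_b ->].
  by apply: (le_bigsup c); apply/atensor_monor/i_anti.
- move=> a; apply: (le_bigsup (dm a)); apply: atensor_monol.
  by apply: asup_ub; exists a.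
Qed.

Lemma bigsup_atensor_inv_box (bx : L -> L) f k :
  {homo f : a b / (a <= b)%O >-> ale a b} ->
  bigsup (fun b => atensor (f b) (inv_box bx k b))
    = bigsup (fun a => atensor (f (bx a)) (k a)).
Proof.
move=> f_homo; apply: ale_anti; apply: bigsup_le.
- move=> b; apply: atensor_asupr_le => _ [c le_b_bc ->].
  by apply: (le_bigsup c); apply/atensor_monol/f_homo.
- move=> a; apply: (le_bigsup (bx a)); apply: atensor_monor.
  by apply: asup_ub; exists a.
Qed.

End LAlgebra.

Theorem mainTheorem5 (A : Aalg) (d : Order.disp_t) (L : tbLatticeType d)
  (bx dm : L -> L) (hbx : box_op bx) (hdm : dia_op dm)
  (f i : L -> A) (hf : is_proper_Afilter f) (hi : is_proper_Aideal i) :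
  bigsup (fun b : L => atensor (inv_dia dm f b) (i b))
    = bigsup (fun a : L => atensor (f a) (i (dm a)))
  /\
  bigsup (fun b : L => atensor (f b) (inv_box bx i b))
    = bigsup (fun a : L => atensor (f (bx a)) (i a)).
Proof.
case: hf hi => [f_filter _] [i_ideal _]; split.
- exact/bigsup_inv_dia_atensor/Aideal_anti.
- exact/bigsup_atensor_inv_box/Afilter_homo.
Qed.
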